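(* Let $\Gamma$ be a flower graph and $\Gamma'$ a mandarin graph, both with $N$ edges $e_1,\dots,e_N$. Then $\mathcal{T}_{\mathrm{sym}}(\Gamma)=\mathcal{T}_{\mathrm{s}}(\Gamma')$. In particular, $P_{\Gamma,\mathrm{sym}}=c\,P_{M,\mathrm{s}}$ for some constant $c$.
   Context: A flower graph has one vertex and $N$ loops; a mandarin graph has two vertices and $N$ edges each joining them; edges are oriented and indexed $e_1,\dots,e_N$ in both, and $\deg(v)$ counts edge-ends. For a metric graph $(\Gamma,\boldsymbol{\ell})$ with $e_j\cong[0,\ell_j]$ and the Laplacian $-d^2/dt^2$ under standard vertex conditions (continuity, zero sum of outgoing derivatives), an eigenpair $(k^2,f)$ with $k>0$ has $f|_{e_j}(t)=A_j\cos(kt)+B_j\sin(kt)=C_j\cos(k(\ell_j-t))+D_j\sin(k(\ell_j-t))$, $\mathrm{tr}_k(f)$ the vector of all $(A_j,B_j,C_j,D_j)$ (for $k=0$, constant $c$: $A_j=C_j=c$, $B_j=D_j=0$). $\mathcal{T}(\Gamma)=\{(\exp(ik\boldsymbol{\ell}),\mathrm{tr}_k(f))\}\subset\mathbb{T}^N\times\mathbb{C}^{4N}$ over all $\boldsymbol{\ell}\in\mathbb{R}_+^N$, eigenvalues, and $f$ in eigenspaces (including $0$), with $\exp(ik\boldsymbol{\ell})=(e^{ik\ell_j})_j$; $\mathcal{T}_{\mathbf{z}}(\Gamma)$ the fiber over $\mathbf{z}$. $P_\Gamma(\mathbf{z})=\det(I_{2N}-\mathrm{diag}(z_1..z_N,z_1..z_N)S)$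 with $S$ the real matrix on $(a_1..a_N,b_1..b_N)$: $(S\mathbf{a})_j=\frac{2}{\deg(o(e_j))}(\sum_{o(e_i)=o(e_j)}b_i+\sum_{\tau(e_i)=o(e_j)}a_i)-b_j$, $(S\mathbf{a})_{N+j}=\frac{2}{\deg(\tau(e_j))}(\sum_{o(e_i)=\tau(e_j)}b_i+\sum_{\tau(e_i)=\tau(e_j)}a_i)-a_j$. For the flower, $P_\Gamma=P_{\Gamma,\mathrm{sym}}\prod_{j=1}^N(1-z_j)$ defines $P_{\Gamma,\mathrm{sym}}$, and $\mathcal{T}_{\mathrm{sym}}(\Gamma)=\{(\mathbf{z},\mathbf{x})\in\mathcal{T}(\Gamma):P_{\Gamma,\mathrm{sym}}(\mathbf{z})=0,\ (A_j,B_j)=(C_j,D_j)\ \forall j\}$. For the mandarin, $P_{M,\mathrm{s}}(\mathbf{z})=\sum_{j=1}^N(z_j-1)\prod_{i\ne j}(z_i+1)$ and $\mathcal{T}_{\mathrm{s}}(\Gamma')=\{(\mathbf{z},\mathbf{x})\in\mathcal{T}(\Gamma'):P_{M,\mathrm{s}}(\mathbf{z})=0,\ (A_j,B_j)=(C_j,D_j)\ \forall j\}$. *)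

From Stdlib Require Import Reals.
From mathcomp Require Import all_boot all_algebra.
From mathcomp Require Import Rstruct.
From mathcomp Require Import complex.
From mathcomp Require Import mpoly.

Set Implicit Arguments.
Unset Strict Implicit.
Unset Printing Implicit Defensive.

Import GRing.Theory.
Local Open Scope ring_scope.

Notation CC := (R[i]).

Definition rC (x : R) : CC := Complex x 0.
Definition cis (x : R) : CC := Complex (cos x) (sin x).

(* A graph with N oriented edges e_0..e_{N-1}: vertex type V, origin o,       *)
(* terminus t.                                                                *)
Section Graph.
Variables (N : nat) (V : finType) (o t : 'I_N -> V).

Definition deg (v : V) : nat := #|[set j | o j == v]| + #|[set j | t j == v]|.

(* the real matrix S acting on (a_1..a_N, b_1..b_N) *)
Definition Smat : 'M[CC]_(N + N) :=
  \matrix_(r, s)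
    match split r, split s with
    | inl j, inl i => (2%:R / (deg (o j))%:R) * (t i == o j)%:R
    | inl j, inr i => (2%:R / (deg (o j))%:R) * (o i == o j)%:R - (i == j)%:R
    | inr j, inl i => (2%:R / (deg (t j))%:R) * (t i == t j)%:R - (i == j)%:R
    | inr j, inr i => (2%:R / (deg (t j))%:R) * (o i == t j)%:R
    end.

Definition idx2 (r : 'I_(N + N)) : 'I_N :=
  match split r with inl j => j | inr j => j end.

Definition Ppoly : {mpoly CC[N]} :=
  \det (1%:M - diag_mx (\row_r 'X_(idx2 r)) *m map_mx (fun c => c%:MP) Smat).

Definition cA (x : 'I_N -> CC * CC * CC * CC) j := (x j).1.1.1.
Definition cB (x : 'I_N -> CC * CC * CC * CC) j := (x j).1.1.2.
Definition cC (x : 'I_N -> CC * CC * CC * CC) j := (x j).1.2.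
Definition cD (x : 'I_N -> CC * CC * CC * CC) j := (x j).2.

(* For k > 0: x = tr_k(f) of an f with f|e_j(t) = A_j cos(kt) + B_j sin(kt)
   = C_j cos(k(l_j - t)) + D_j sin(k(l_j - t)) satisfying -f'' = k^2 f and the
   standard vertex conditions (continuity, zero sum of outgoing derivatives). *)
Definition eigcoeffs (k : R) (l : 'I_N -> R) (x : 'I_N -> CC * CC * CC * CC) :
    Prop :=
  (forall j, cC x j = cA x j * rC (cos (k * l j)) + cB x j * rC (sin (k * l j))
          /\ cD x j = cA x j * rC (sin (k * l j)) - cB x j * rC (cos (k * l j)))
  /\ (forall i j, (o i = o j -> cA x i = cA x j)
               /\ (t i = t j -> cC x i = cC x j)
               /\ (o i = t j -> cA x i = cC x j))
  /\ (forall v : V, \sum_(j | o j == v) rC k * cB x j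
                   + \sum_(j | t j == v) rC k * cD x j = 0).

(* k^2 (k > 0) is an eigenvalue: there is a nonzero eigenfunction *)
Definition is_eig (k : R) (l : 'I_N -> R) : Prop :=
  exists x, eigcoeffs k l x /\ exists j, (cA x j, cB x j) != (0, 0).

Definition inT (z : 'I_N -> CC) (x : 'I_N -> CC * CC * CC * CC) : Prop :=
  exists l : 'I_N -> R, (forall j, 0 < l j) /\
  exists k : R, 0 <= k /\ z = (fun j => cis (k * l j)) /\
    ((k = 0 /\ exists c : CC, x = (fun _ => (c, 0, c, 0)))
     \/ (0 < k /\ is_eig k l /\ eigcoeffs k l x)).

Definition symcoeffs (x : 'I_N -> CC * CC * CC * CC) : Prop :=
  forall j, cA x j = cC x j /\ cB x j = cD x j.

End Graph.

Definition flower_o (N : nat) (j : 'I_N) : unit := tt.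
Definition flower_t (N : nat) (j : 'I_N) : unit := tt.
Definition mand_o (N : nat) (j : 'I_N) : bool := false.
Definition mand_t (N : nat) (j : 'I_N) : bool := true.

Definition P_flower (N : nat) : {mpoly CC[N]} :=
  Ppoly (@flower_o N) (@flower_t N).

Definition P_Ms (N : nat) : {mpoly CC[N]} :=
  \sum_(j < N) ('X_j - 1) * \prod_(i < N | i != j) ('X_i + 1).

(* T_sym(flower): P_{Gamma,sym} is the polynomial Q with
   P_Gamma = Q * prod_j (1 - z_j) (unique since {mpoly} is a domain) *)
Definition in_Tsym_flower (N : nat) (z : 'I_N -> CC)
    (x : 'I_N -> CC * CC * CC * CC) : Prop :=
  inT (@flower_o N) (@flower_t N) z x
  /\ (exists Q : {mpoly CC[N]},
        P_flower N = Q * \prod_(j < N) (1 - 'X_j) /\ Q.@[z] = 0)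
  /\ symcoeffs x.

Definition in_Ts_mandarin (N : nat) (z : 'I_N -> CC)
    (x : 'I_N -> CC * CC * CC * CC) : Prop :=
  inT (@mand_o N) (@mand_t N) z x
  /\ (P_Ms N).@[z] = 0
  /\ symcoeffs x.

(* On the flower every vertex condition involves all edges with the same
   weight u = 1/N, so S = [[uJ, uJ - I], [uJ - I, uJ]] (J the all-ones matrix)
   and det (1 - diag(z, z) S) = det (P + Q) * det (P - Q) for the blocks
   [[P, Q], [Q, P]] of 1 - diag(z, z) S.  Here P - Q = diag (1 - z_j), while
   P + Q = diag (1 + z_j) - 2u z 1^T is a rank-one perturbation of a diagonal
   matrix, with determinant -u P_{M,s}(z); hence P_{Gamma,sym} = -P_{M,s}/N.
   For coefficients with (A_j, B_j) = (C_j, D_j) the vertex conditions of the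
   flower and of the mandarin both reduce to "A_j is constant and
   sum_j B_j = 0", so the two graphs have the same symmetric eigenfunctions.
   At a zero z = e^{ikl} of P_{M,s} such an eigenfunction always exists:
   A_j = prod_i (1 + z_i) and B_j = -i (z_j - 1) prod_{i <> j} (1 + z_i), or,
   when that product vanishes, +-sin(kt) on two edges with z_j = -1. *)

From Stdlib Require Import Reals.
From mathcomp Require Import all_boot all_algebra.
From mathcomp Require Import Rstruct complex mpoly.
From mathcomp Require Import ring.

Set Implicit Arguments.
Unset Strict Implicit.

Import order.Order.TTheory GRing.Theory Num.Theory.
Local Open Scope ring_scope.

Section Determinants.
Variable R : comPzRingType.

Lemma det_block_sym n (P Q : 'M[R]_n) :
  \det (block_mx P Q Q P) = \det (P + Q) * \det (P - Q).
Proof.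
have triangularize : block_mx 1%:M 0 (- 1%:M) 1%:M *m block_mx P Q Q P
    *m block_mx 1%:M 0 1%:M 1%:M = block_mx (P + Q) Q 0 (P - Q).
  rewrite !mulmx_block !(mulmx1, mul1mx, mulmx0, mul0mx, mulNmx, addr0, add0r).
  by congr block_mx; rewrite (addrC (- Q)) // addrACA addNr subrr addr0.
move: (congr1 determinant triangularize).
by rewrite !det_mulmx det_lblock det_ublock det_lblock !det1 !mul1r mulr1.
Qed.

Lemma det_ones_row0 n (d c : 'I_n.+1 -> R) :
  \det (\matrix_(i, j) (if i == 0 then 1 else (i == j)%:R * d i + c i))
  = \prod_(i < n) d (lift 0 i).
Proof.
pose L : 'M[R]_n.+1 :=
  \matrix_(i, j) ((i == j)%:R + ((j == 0) && (i != 0))%:R * c i).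
pose U : 'M[R]_n.+1 := \matrix_(i, j) (if i == 0 then 1 else (i == j)%:R * d i).
(* Subtracting c i times row 0 from row i leaves the upper triangular U. *)
have -> : \matrix_(i, j) (if i == 0 then 1 else (i == j)%:R * d i + c i) = L *m U.
  apply/matrixP => i j; rewrite !mxE.
  under eq_bigr do rewrite !mxE mulrDl.
  rewrite big_split /= (bigD1 i) //= eqxx mul1r big1; last first.
    by move=> k /negbTE; rewrite eq_sym => ->; rewrite mul0r.
  rewrite addr0 (bigD1 0) //= big1; last by move=> k /negbTE ->; rewrite !mul0r.
  by case: eqP => [->|_]; rewrite /= ?mul0r ?addr0 ?mul1r ?mulr1.
have neq_lt (i j : 'I_n.+1) : (i < j)%N -> (i == j) = false /\ (j == 0) = false.
  move=> lt_ij; rewrite -!val_eqE /= ltn_eqF // gtn_eqF //.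
  exact: leq_ltn_trans lt_ij.
have L_trig : is_trig_mx L.
  apply/is_trig_mxP => i j /neq_lt[ij j0]; rewrite !mxE ij j0.
  by rewrite mul0r addr0.
have U_trig : is_trig_mx U^T.
  apply/is_trig_mxP => i j /neq_lt[ij j0]; rewrite !mxE j0 eq_sym ij.
  by rewrite mul0r.
rewrite det_mulmx (det_trig L_trig) -det_tr (det_trig U_trig).
rewrite big1 ?mul1r => [|i _]; last by rewrite !mxE eqxx andbN mul0r addr0.
rewrite big_ord_recl !mxE eqxx mul1r; apply: eq_bigr => i _.
by rewrite !mxE eq_sym (negbTE (neq_lift _ _)) eqxx mul1r.
Qed.

Lemma det_diag_add_rank1 n (d c : 'I_n -> R) :
  \det (\matrix_(i, j) ((i == j)%:R * d i + c i))
  = \prod_i d i + \sum_j c j * \prod_(i | i != j) d i.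
Proof.
elim: n d c => [|n IH] d c; first by rewrite det_mx00 !big_ord0 addr0.
set A := \matrix_(i, j) _.
pose B : 'M[R]_n.+1 := \matrix_(i, j) (if i == 0 then (j == 0)%:R else A i j).
pose C : 'M[R]_n.+1 := \matrix_(i, j) (if i == 0 then 1 else A i j).
have split_row0 : \det A = d 0 * \det B + c 0 * \det C.
  apply: (determinant_multilinear (i0 := 0)).
  - by apply/rowP => j; rewrite !mxE eqxx /= mulr1 mulrC eq_sym.
  - by apply/matrixP => i j; rewrite !mxE.
  - by apply/matrixP => i j; rewrite !mxE.
have detB :
    \det B = \det (\matrix_(i, j) ((i == j)%:R * d (lift 0 i) + c (lift 0 i))).
  rewrite (expand_det_row _ 0) big_ord_recl big1 ?addr0 => [|j _]; last first.
    by rewrite !mxE eqxx mul0r.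
  rewrite /cofactor !mxE eqxx mul1r expr0 mul1r; congr (\det _).
  apply/matrixP => i j; rewrite !mxE eq_sym (negbTE (neq_lift _ _)).
  by rewrite (inj_eq (@lift_inj _ 0)).
have detC : \det C = \prod_(i < n) d (lift 0 i).
  rewrite -(det_ones_row0 d c); congr (\det _).
  by apply/matrixP => i j; rewrite !mxE.
have prod_recl (P : pred 'I_n.+1) : \prod_(i | P i) d i
    = (if P 0 then d 0 else 1) * \prod_(i < n | P (lift 0 i)) d (lift 0 i).
  by rewrite big_mkcond big_ord_recl -big_mkcond.
rewrite split_row0 detB detC IH big_ord_recl [X in _ = _ + X]big_ord_recl /=.
rewrite !prod_recl eqxx /=.
under [X in _ = _ + (_ + X)]eq_bigr => j _.
  rewrite prod_recl neq_lift.
  under eq_bigl do rewrite (inj_eq (@lift_inj _ 0)).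
  over.
rewrite mul1r mulrDr -addrA [c 0 * _ + _]addrC big_distrr /=.
by congr (_ + (_ + _)); apply: eq_bigr => j _; rewrite mulrCA.
Qed.

Lemma det_diag_add1_sub_rank1 n (a : 'I_n -> R) (u : R) :
  u * n%:R = 1 ->
  \det (\matrix_(i, j) ((i == j)%:R * (a i + 1) - u *+ 2 * a i))
  = - u * \sum_j (a j - 1) * \prod_(i | i != j) (a i + 1).
Proof.
move=> un1; rewrite det_diag_add_rank1.
set W := \prod_i (a i + 1); set S := \sum_j \prod_(i | i != j) (a i + 1).
have mul_rest j : (a j + 1) * \prod_(i | i != j) (a i + 1) = W.
  by rewrite /W [RHS](bigD1 j).
have sumW : \sum_(j < n) W = W * n%:R by rewrite sumr_const card_ord mulr_natr.
have -> : \sum_j - (u *+ 2 * a j) * \prod_(i | i != j) (a i + 1)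
    = - (u *+ 2) * (W * n%:R - S).
  rewrite -sumW /S -sumrB mulr_sumr; apply: eq_bigr => j _.
  by rewrite -(mul_rest j); ring.
have -> : \sum_j (a j - 1) * \prod_(i | i != j) (a i + 1) = W * n%:R - S *+ 2.
  rewrite -sumW /S -sumrMnl -sumrB; apply: eq_bigr => j _.
  by rewrite -(mul_rest j); ring.
transitivity (W * (1 - u * n%:R) - u * (W * n%:R - S *+ 2)); first ring.
by rewrite un1 subrr mulr0 add0r mulNr.
Qed.

End Determinants.

Lemma split_lshift m n (i : 'I_m) : split (lshift n i) = inl i.
Proof. exact: (unsplitK (inl i)). Qed.

Lemma split_rshift m n (i : 'I_n) : split (rshift m i) = inr i.
Proof. exact: (unsplitK (inr i)). Qed.

Lemma deg_flower N (v : unit) : deg (@flower_o N) (@flower_t N) v = (N + N)%N.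
Proof.
case: v.
have all_edges (e : 'I_N -> unit) : [set j | e j == tt] = setT.
  by apply/setP => j; rewrite !inE; case: (e j).
by rewrite /deg !all_edges cardsT card_ord.
Qed.

Lemma P_flower_det N : (0 < N)%N ->
  P_flower N = \det (\matrix_(i, j) ((i == j)%:R * ('X_i + 1)
                                     - (N%:R^-1 : CC)%:MP *+ 2 * 'X_i))
               * \prod_(j < N) (1 - 'X_j).
Proof.
move=> N_gt0; set u : {mpoly CC[N]} := (N%:R^-1)%:MP.
have weight : (2%:R / (N + N)%:R : CC) = N%:R^-1.
  by rewrite natrD; field; rewrite -natrD !pnatr_eq0 -!lt0n addn_gt0 N_gt0.
pose P : 'M[{mpoly CC[N]}]_N := \matrix_(i, j) ((i == j)%:R - 'X_i * u).
pose Q : 'M[{mpoly CC[N]}]_N := \matrix_(i, j) ('X_i * ((i == j)%:R - u)).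
rewrite /P_flower /Ppoly.
have -> : 1%:M - diag_mx (\row_r 'X_(idx2 r))
            *m map_mx (fun c => c%:MP) (Smat (@flower_o N) (@flower_t N))
          = block_mx P Q Q P.
  apply/matrixP => r s; rewrite mul_diag_mx !mxE.
  case: (split_ordP r) => i ->; case: (split_ordP s) => j ->;
    rewrite ?block_mxEul ?block_mxEur ?block_mxEdl ?block_mxEdr ?mxE /idx2
      ?split_lshift ?split_rshift ?eq_shift !deg_flower weight /P /Q !mxE /=;
    by rewrite mulr1 ?rmorphB /= ?rmorph_nat ?[j == i]eq_sym ?sub0r -?mulrN
      ?opprB.
rewrite det_block_sym.
have -> : P + Q = \matrix_(i, j) ((i == j)%:R * ('X_i + 1) - u *+ 2 * 'X_i).
  by apply/matrixP => i j; rewrite !mxE; clearbody u; ring.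
have -> : P - Q = diag_mx (\row_j (1 - 'X_j)).
  apply/matrixP => i j; rewrite !mxE; clearbody u.
  by case: eqP => [->|_]; rewrite ?mulr1n ?mulr0n; ring.
by rewrite det_diag; congr (_ * _); apply: eq_bigr => i _; rewrite mxE.
Qed.

Lemma P_flower_factor N : (0 < N)%N ->
  P_flower N = ((- N%:R^-1 : CC) *: P_Ms N) * \prod_(j < N) (1 - 'X_j).
Proof.
move=> N_gt0; rewrite P_flower_det // det_diag_add1_sub_rank1.
  by rewrite /P_Ms -mul_mpolyC rmorphN.
by rewrite -mpolyC_nat -rmorphM /= mulVf // pnatr_eq0 -lt0n.
Qed.

Lemma rC_eq0 (x : R) : (rC x == 0) = (x == 0).
Proof. by rewrite eq_complex /= eqxx andbT. Qed.

Lemma rC_sqr_cos_add_sqr_sin (t : R) : rC (cos t) ^+ 2 + rC (sin t) ^+ 2 = 1.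
Proof.
apply/eqP; rewrite eq_complex /= !(mulr0, mul0r, subr0, addr0, eqxx) andbT.
by apply/eqP; have := sin2_cos2 t; rewrite /Rsqr Rplus_comm.
Qed.

Lemma cisE (t : R) : cis t = rC (cos t) + 'i * rC (sin t).
Proof.
by apply/eqP; rewrite eq_complex /= !(mulr0, mul0r, mul1r, subr0, addr0, add0r, eqxx).
Qed.

Lemma cis_eqN1 (t : R) : cis t = -1 -> rC (cos t) = -1 /\ rC (sin t) = 0.
Proof.
case=> cos_t sin_t; rewrite /rC cos_t sin_t.
by split; apply/eqP; rewrite eq_complex /= ?oppr0 !eqxx.
Qed.

(* With z = e^{it}, (A, B) is proportional to (cos (t/2), sin (t/2)), so that
   A cos s + B sin s is symmetric about s = t/2. *)
Lemma symmetric_edge_coeffs (T : comPzRingType) (I c s w : T) :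
  I ^+ 2 = -1 -> c ^+ 2 + s ^+ 2 = 1 ->
  let A := (c + I * s + 1) * w in let B := - I * (c + I * s - 1) * w in
  A = A * c + B * s /\ B = A * s - B * c.
Proof.
move=> I2 cs1 A B; rewrite /A /B; split; apply/eqP; rewrite -subr_eq0; apply/eqP.
  transitivity (w * ((I ^+ 2 + 1) * s ^+ 2 - (c ^+ 2 + s ^+ 2 - 1))); first ring.
  by rewrite I2 cs1 addNr subrr mul0r subrr mulr0.
transitivity
  (- w * ((I ^+ 2 + 1) * (1 + c) * s + I * (c ^+ 2 + s ^+ 2 - 1))); first ring.
by rewrite I2 cs1 addNr subrr !mul0r mulr0 addr0 mulr0.
Qed.

Lemma P_Ms_root_antiperiodic (F : numDomainType) N (z : 'I_N -> F) :
  \sum_j (z j - 1) * \prod_(i | i != j) (z i + 1) = 0 ->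
  \prod_j (z j + 1) = 0 ->
  exists j0 j1, [/\ j0 != j1, z j0 = -1 & z j1 = -1].
Proof.
move=> root /eqP/prodf_eq0[j0 _]; rewrite addr_eq0 => /eqP zj0.
have others_vanish :
    \sum_(j | j != j0) (z j - 1) * \prod_(i | i != j) (z i + 1) = 0.
  apply: big1 => j j_neq.
  by rewrite (bigD1 j0) 1?eq_sym //= zj0 addNr mul0r mulr0.
move: root; rewrite (bigD1 j0) //= others_vanish addr0 zj0 => /eqP.
rewrite mulf_eq0 -opprD oppr_eq0 -mulr2n mulrn_eq0 oner_eq0 /=.
move=> /prodf_eq0[j1 j1_neq].
by rewrite addr_eq0 => /eqP zj1; exists j0, j1; rewrite eq_sym.
Qed.

Lemma meval_P_Ms N (z : 'I_N -> CC) :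
  (P_Ms N).@[z] = \sum_j (z j - 1) * \prod_(i | i != j) (z i + 1).
Proof.
rewrite /P_Ms rmorph_sum; apply: eq_bigr => j _.
rewrite rmorphM rmorph_prod /= mevalB mevalXU meval1; congr (_ * _).
by apply: eq_bigr => i _; rewrite mevalD mevalXU meval1.
Qed.

Local Notation coeffs N := ('I_N -> CC * CC * CC * CC).

(* What the vertex conditions of eigcoeffs reduce to, on the flower and on the
   mandarin alike, when (A, B) = (C, D). *)
Definition sym_eigcoeffs {N} (k : R) (l : 'I_N -> R) (x : coeffs N) : Prop :=
  (forall j, cC x j = cA x j * rC (cos (k * l j)) + cB x j * rC (sin (k * l j))
          /\ cD x j = cA x j * rC (sin (k * l j)) - cB x j * rC (cos (k * l j)))
  /\ (forall i j, cA x i = cA x j) /\ \sum_j cB x j = 0.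

Section SymmetricEigenfunctions.
Context {N : nat} {k : R} {l : 'I_N -> R}.

Lemma eigcoeffs_flower_sym (x : coeffs N) : 0 < k -> symcoeffs x ->
  eigcoeffs (@flower_o N) (@flower_t N) k l x <-> sym_eigcoeffs k l x.
Proof.
move=> k_gt0 sym_x; have AC j := (sym_x j).1; have BD j := (sym_x j).2.
have sum_o (F : 'I_N -> CC) : \sum_(j | @flower_o N j == tt) F j = \sum_j F j.
  exact: eq_bigl.
have sum_t (F : 'I_N -> CC) : \sum_(j | @flower_t N j == tt) F j = \sum_j F j.
  exact: eq_bigl.
split=> [[transfer [cont vertex]] | [transfer [constA sumB]]].
  split=> //; split=> [i j|]; first exact: (cont i j).1.
  move: (vertex tt); rewrite sum_o sum_t; under [X in _ + X]eq_bigr do rewrite -BD.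
  rewrite -mulr_sumr -mulrDr => /eqP; rewrite mulf_eq0 rC_eq0 gt_eqF //=.
  by rewrite -mulr2n mulrn_eq0 => /eqP.
split=> //; split=> [i j|[]]; first by rewrite -!AC.
rewrite sum_o sum_t; under [X in _ + X]eq_bigr do rewrite -BD.
by rewrite -mulr_sumr sumB mulr0 addr0.
Qed.

Lemma eigcoeffs_mandarin_sym (x : coeffs N) : 0 < k -> symcoeffs x ->
  eigcoeffs (@mand_o N) (@mand_t N) k l x <-> sym_eigcoeffs k l x.
Proof.
move=> k_gt0 sym_x; have AC j := (sym_x j).1; have BD j := (sym_x j).2.
have sum_o (F : 'I_N -> CC) : \sum_(j | @mand_o N j == false) F j = \sum_j F j.
  exact: eq_bigl.
have sum_t (F : 'I_N -> CC) : \sum_(j | @mand_t N j == true) F j = \sum_j F j.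
  exact: eq_bigl.
have no_o (F : 'I_N -> CC) : \sum_(j | @mand_o N j == true) F j = 0.
  exact: big_pred0.
have no_t (F : 'I_N -> CC) : \sum_(j | @mand_t N j == false) F j = 0.
  exact: big_pred0.
split=> [[transfer [cont vertex]] | [transfer [constA sumB]]].
  split=> //; split=> [i j|]; first exact: (cont i j).1.
  move: (vertex false); rewrite sum_o no_t addr0 -mulr_sumr => /eqP.
  by rewrite mulf_eq0 rC_eq0 gt_eqF //= => /eqP.
split=> //; split=> [i j|[]]; first by rewrite -!AC.
  rewrite no_o sum_t add0r; under eq_bigr do rewrite -BD.
  by rewrite -mulr_sumr sumB mulr0.
by rewrite sum_o no_t addr0 -mulr_sumr sumB mulr0.
Qed.

Lemma sym_eigcoeffs_generic : (0 < N)%N ->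
  (P_Ms N).@[fun j => cis (k * l j)] = 0 -> \prod_j (cis (k * l j) + 1) != 0 ->
  exists x, [/\ symcoeffs x, sym_eigcoeffs k l x
             & exists j, (cA x j, cB x j) != (0, 0)].
Proof.
rewrite meval_P_Ms => N_gt0 root; set W := \prod_j _ => W_neq0.
pose w j := \prod_(i | i != j) (cis (k * l i) + 1).
pose B j := - 'i * (cis (k * l j) - 1) * w j.
exists (fun j => (W, B j, W, B j)); split=> //; last first.
  by exists (Ordinal N_gt0); rewrite xpair_eqE negb_and W_neq0.
split; last split=> //.
  move=> j; rewrite /cA /cB /cC /cD /= (_ : W = (cis (k * l j) + 1) * w j).
    have := @symmetric_edge_coeffs _ 'i _ _ (w j) (sqrCi _)
      (rC_sqr_cos_add_sqr_sin (k * l j)).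
    by rewrite -cisE.
  by rewrite /W (bigD1 j).
rewrite /cB /= (eq_bigr (fun j => - 'i * ((cis (k * l j) - 1) * w j))).
  by rewrite -mulr_sumr root mulr0.
by move=> j _; rewrite mulrA.
Qed.

Lemma sym_eigcoeffs_antiperiodic j0 j1 : j0 != j1 ->
  cis (k * l j0) = -1 -> cis (k * l j1) = -1 ->
  exists x, [/\ symcoeffs x, sym_eigcoeffs k l x
             & exists j, (cA x j, cB x j) != (0, 0)].
Proof.
move=> j01 z_j0 z_j1; pose b j : CC := (j == j0)%:R - (j == j1)%:R.
exists (fun j => (0, b j, 0, b j)); split=> //; last first.
  exists j0; rewrite /cA /cB /= /b eqxx (negbTE j01) subr0.
  by rewrite xpair_eqE oner_eq0 andbF.
split; last split=> //.
  move=> j; rewrite /cA /cB /cC /cD /= !mul0r !add0r.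
  have [z_j|z_j] := eqVneq (cis (k * l j)) (-1).
    by have [-> ->] := cis_eqN1 z_j; rewrite mulr0 mulrN1 opprK.
  have /negbTE j_j0 : j != j0 by move: z_j; apply: contra_neq => ->.
  have /negbTE j_j1 : j != j1 by move: z_j; apply: contra_neq => ->.
  by rewrite /b j_j0 j_j1 subrr !mul0r oppr0.
have sum_delta (a : 'I_N) : \sum_j ((j == a)%:R : CC) = 1.
  by rewrite (bigD1 a) //= eqxx big1 ?addr0 // => j /negbTE ->.
by rewrite /cB /= sumrB !sum_delta subrr.
Qed.

Lemma sym_eigcoeffs_of_P_Ms_root : (0 < N)%N ->
  (P_Ms N).@[fun j => cis (k * l j)] = 0 ->
  exists x, [/\ symcoeffs x, sym_eigcoeffs k l x
             & exists j, (cA x j, cB x j) != (0, 0)].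
Proof.
move=> N_gt0 root; have [W0|] := eqVneq (\prod_j (cis (k * l j) + 1)) 0; last first.
  exact: sym_eigcoeffs_generic.
move: root; rewrite meval_P_Ms => /P_Ms_root_antiperiodic/(_ W0).
move=> [j0 [j1 [j01 z_j0 z_j1]]].
exact: sym_eigcoeffs_antiperiodic z_j0 z_j1.
Qed.

End SymmetricEigenfunctions.

Lemma inT_flower_iff_mandarin N (z : 'I_N -> CC) (x : coeffs N) :
  (0 < N)%N -> symcoeffs x -> (P_Ms N).@[z] = 0 ->
  inT (@flower_o N) (@flower_t N) z x <-> inT (@mand_o N) (@mand_t N) z x.
Proof.
move=> N_gt0 sym_x root.
suff eig_iff k l : 0 < k -> z = (fun j => cis (k * l j)) ->
       is_eig (@flower_o N) (@flower_t N) k l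
    /\ eigcoeffs (@flower_o N) (@flower_t N) k l x
    <-> is_eig (@mand_o N) (@mand_t N) k l
    /\ eigcoeffs (@mand_o N) (@mand_t N) k l x.
  split=> -[l [l_gt0 [k [k_ge0 [zE eig]]]]]; exists l; split=> //; exists k;
    do 2!split=> //; (case: eig => [const | [k_gt0 eig]]; [by left | right]);
    by split=> //; apply/(eig_iff k l k_gt0 zE).
move=> k_gt0 zE; rewrite zE in root.
have [y [sym_y eig_y y_neq0]] := sym_eigcoeffs_of_P_Ms_root N_gt0 root.
have flower_eig y' := @eigcoeffs_flower_sym N k l y' k_gt0.
have mand_eig y' := @eigcoeffs_mandarin_sym N k l y' k_gt0.
split=> [[_ /(flower_eig _ sym_x) eig_x] | [_ /(mand_eig _ sym_x) eig_x]]; split.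
- by exists y; split=> //; apply/mand_eig.
- exact/mand_eig.
- by exists y; split=> //; apply/flower_eig.
- exact/flower_eig.
Qed.

Lemma prod_one_sub_X_neq0 N : \prod_(j < N) (1 - 'X_j : {mpoly CC[N]}) != 0.
Proof.
apply/eqP => /(congr1 (meval (fun _ => 0))); rewrite rmorph_prod meval0 big1.
  by move/eqP; rewrite oner_eq0.
by move=> j _; rewrite rmorphB rmorph1 /= mevalXU subr0.
Qed.

Lemma P_flower_sym_root_iff N (z : 'I_N -> CC) : (0 < N)%N ->
  (exists Q, P_flower N = Q * \prod_(j < N) (1 - 'X_j) /\ Q.@[z] = 0)
  <-> (P_Ms N).@[z] = 0.
Proof.
move=> N_gt0; split=> [[Q [PQ Qz]] | root]; last first.
  exists ((- N%:R^-1) *: P_Ms N); split; first exact: P_flower_factor.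
  by rewrite mevalZ root mulr0.
have QE : Q = (- N%:R^-1) *: P_Ms N.
  by apply: (mulIf (prod_one_sub_X_neq0 N)); rewrite -PQ P_flower_factor.
move: Qz; rewrite QE mevalZ => /eqP; rewrite mulf_eq0 oppr_eq0 invr_eq0.
by rewrite pnatr_eq0 eqn0Ngt N_gt0 /= => /eqP.
Qed.

Theorem mainTheorem14 (N : nat) (hN : (1 <= N)%N) :
  (forall (z : 'I_N -> CC) (x : 'I_N -> CC * CC * CC * CC),
      in_Tsym_flower z x <-> in_Ts_mandarin z x)
  /\ (exists c : CC,
        P_flower N = (c *: P_Ms N) * \prod_(j < N) (1 - 'X_j)).
Proof.
split; last by exists (- N%:R^-1); exact: P_flower_factor.
move=> z x; split.
  move=> [inT_x [/(P_flower_sym_root_iff z hN) root sym_x]].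
  by split; first exact/(inT_flower_iff_mandarin hN sym_x root).
move=> [inT_x [root sym_x]].
split; first exact/(inT_flower_iff_mandarin hN sym_x root).
by split; first exact/(P_flower_sym_root_iff z hN).
Qed.
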